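(* Let $G$ be a finite abelian group and let $\rho\ge4$ be an integer. Then $s_\rho(G)\le\frac{2}{\rho+1}|G|$, with equality if and only if $G$ has a subgroup $H$ such that $G/H$ is cyclic of order $\rho+1$. Moreover, for a subset $A\subseteq G$ the following are equivalent: (i) $A$ is a generating set for $G$ with $\operatorname{diam}^+_A(G)\ge\rho$ and $|A|=\frac{2}{\rho+1}|G|$; (ii) $A=H\cup(g+H)$, where $H$ is a subgroup of $G$ such that $G/H$ is cyclic of order $\rho+1$, and $g\in G$ is such that $g+H$ generates $G/H$.
   Context: Groups are written additively. For $A\subseteq G$ let $A_0:=A\cup\{0\}$ and $\langle A\rangle^+_\rho:=\rho A_0=\{a_1+\dots+a_\rho:a_i\in A_0\}$. $\operatorname{diam}^+_A(G):=\min\{\rho\in\mathbb{N}_0:\langle A\rangle^+_\rho=G\}$ ($\min\varnothing=\infty$). With the convention $\max\varnothing=0$: $s_\rho(G):=\max\{|A|: A\subseteq G,\ \rho\le\operatorname{diam}^+_A(G)<\infty\}$. *)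

(* The finite abelian group G is a {group gT} with [abelian G];
   the paper's additive notation becomes multiplicative (0 ~ 1, a+b ~ a*b). *)
From mathcomp Require Import all_boot all_order all_fingroup all_solvable.
From Stdlib Require Import ClassicalEpsilon.
Set Implicit Arguments. Unset Strict Implicit. Unset Printing Implicit Defensive.
Local Open Scope group_scope.

Definition A0 (gT : finGroupType) (A : {set gT}) : {set gT} := 1 |: A.

Fixpoint sumset (gT : finGroupType) (rho : nat) (A : {set gT}) : {set gT} :=
  match rho with
  | 0 => [set 1]
  | r.+1 => sumset r A * A0 A
  end.

(* rho <= diam^+_A(G) < oo  (diam = min of the set of r with rA_0 = G) *)
Definition diam_ge_fin (gT : finGroupType) (G : {set gT}) (A : {set gT}) (rho : nat) : Prop :=
  (exists r, sumset r A = G) /\ (forall r, sumset r A = G -> rho <= r).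

Definition pbool (P : Prop) : bool :=
  if excluded_middle_informative P then true else false.

(* s_rho(G) := max { |A| : A ⊆ G, rho <= diam^+_A(G) < oo }, max ∅ = 0 *)
Definition s_rho (gT : finGroupType) (G : {set gT}) (rho : nat) : nat :=
  \max_(A : {set gT} | (A \subset G) && pbool (diam_ge_fin G A rho)) #|A|.

(* Hamidoune's isoperimetric method, with B := A_0.  Among the nonempty
   X \subset G with X + B <> G, those minimising |X + B| - |X| and then |X|
   (the atoms) are either equal or disjoint, and translates of atoms are atoms,
   so the atom containing 0 is a subgroup H.  If diam_A(G) >= rho, the sumsets
   B, 2B, ..., (rho-2)B each grow by at least k := |H + B| - |H|, while
   (rho-2)B misses a translate of -B; hence 2|B| + (rho-3)k <= |G|.  As B
   generates G it is not contained in H, so |H + B| >= 2|H| and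
   k >= |H + B|/2 >= |B|/2, which gives (rho+1)|B| <= 2|G|.  Equality forces
   |H + B| = |B| = 2|H|, i.e. B = H u (g + H), and then g + H generates G/H,
   of order rho+1.  Conversely, for such H and g the image of rA_0 in G/H is
   {0, g, ..., rg}, so the diameter is exactly rho. *)

From mathcomp Require Import all_boot all_order all_fingroup all_solvable zify.
From Stdlib Require Import ClassicalEpsilon.
Set Implicit Arguments. Unset Strict Implicit. Unset Printing Implicit Defensive.
Local Open Scope group_scope.

(* Cardinals [#|X|] of the same set may carry syntactically different (but
   convertible) finType instances, which [lia] would treat as distinct atoms. *)
Ltac set_cards :=
  repeat match goal with
  | |- context [@card ?T ?X] => let n := fresh "n" in set n := @card T X; clearbody n
  end.

Section Sumset.
Variables (gT : finGroupType) (A : {set gT}).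
Implicit Types (G : {group gT}) (r s : nat).

Lemma mem_A0_1 : 1 \in A0 A.
Proof. exact: setU11. Qed.

Lemma subset_A0 : A \subset A0 A.
Proof. exact: subsetUr. Qed.

Lemma sumset1 : sumset 1 A = A0 A.
Proof. by rewrite /= -set1gE mul1g. Qed.

Lemma sumsetD r s : sumset (r + s) A = sumset r A * sumset s A.
Proof.
elim: s => [|s IHs]; first by rewrite addn0 /= -set1gE mulg1.
by rewrite addnS /= IHs mulgA.
Qed.

Lemma mem_sumset_1 r : 1 \in sumset r A.
Proof.
elim: r => [|r IHr] /=; first exact: set11.
by rewrite -(mulg1 1) mem_mulg ?mem_A0_1.
Qed.

Lemma sumset_leq r s : r <= s -> sumset r A \subset sumset s A.
Proof.
move/subnKC <-; rewrite sumsetD.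
exact: mulg_subl (mem_sumset_1 _).
Qed.

Lemma sumset_subG G r : A \subset G -> sumset r A \subset G.
Proof.
move=> sAG; elim: r => [|r IHr] /=; first by rewrite sub1set group1.
by rewrite mul_subG // subUset sub1G.
Qed.

Lemma sumset_neq_leq G r s :
  A \subset G -> r <= s -> sumset s A != G -> sumset r A != G.
Proof.
move=> sAG le_rs; apply: contra => /eqP SrG.
by rewrite eqEsubset sumset_subG //= -{1}SrG sumset_leq.
Qed.

Lemma sumset_eq_gen G r : A \subset G -> sumset r A = G -> <<A>> = G.
Proof.
move=> sAG SrG; apply/eqP; rewrite eqEsubset gen_subG sAG /= -{1}SrG.
exact/sumset_subG/subset_gen.
Qed.

(* The increasing chain of sumsets must stall within #|<<A>>| steps, and a
   stalled sumset is closed under products. *)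
Lemma sumset_gen : exists r, sumset r A = <<A>>.
Proof.
pose n := #|<<A>>|.
have [r Sr_stable] : exists r, sumset r.+1 A = sumset r A.
  case: (pickP (fun i : 'I_n.+1 => sumset i.+1 A == sumset i A)) => [i /eqP|none].
    by exists i.
  have grow i : i <= n -> i < #|sumset i A|.
    elim: i => [|i IHi] le_in.
      by rewrite card_gt0; apply/set0Pn; exists 1; apply: mem_sumset_1.
    apply: leq_ltn_trans (IHi (ltnW le_in)) (proper_card _).
    by rewrite properEneq sumset_leq // andbT eq_sym (none (@Ordinal n.+1 i (ltnW le_in))).
  have := grow n (leqnn n).
  by rewrite ltnNge subset_leq_card // sumset_subG // subset_gen.
have Sr_absorbs s : sumset (r + s) A = sumset r A.
  elim: s => [|s IHs]; first by rewrite addn0.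
  by rewrite addnS /= IHs; exact: Sr_stable.
have Sr_group : group_set (sumset r A).
  apply/group_setP; split=> [|x y Sx Sy]; first exact: mem_sumset_1.
  by rewrite -(Sr_absorbs r) sumsetD mem_mulg.
exists r; apply/eqP; rewrite eqEsubset sumset_subG ?subset_gen //=.
rewrite (gen_subG A (Group Sr_group)) /= -Sr_stable.
by apply: subset_trans subset_A0 _; rewrite -sumset1 sumset_leq.
Qed.

Lemma A0_subG G : A \subset G -> A0 A \subset G.
Proof. by move=> sAG; rewrite subUset sub1G. Qed.

(* If x is missed by sumset r.+1 A, the translate x (A0 A)^-1 avoids sumset r A. *)
Lemma card_sumset_A0 G r :
  A \subset G -> sumset r.+1 A != G -> #|sumset r A| + #|A0 A| <= #|G|.
Proof.
move=> sAG; rewrite eqEsubset sumset_subG //= => /subsetPn[x Gx notSx].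
have disj : sumset r A :&: x *: (A0 A)^-1 = set0.
  apply/setP => y; rewrite in_setI in_set0; apply/andP => -[Sy /lcosetP[b A0b def_y]].
  have A0b1 : b^-1 \in A0 A by rewrite -mem_invg.
  case/negP: notSx; have -> : x = y * b^-1 by rewrite def_y mulgK.
  exact: mem_mulg.
have := cardsUI (sumset r A) (x *: (A0 A)^-1).
rewrite disj cards0 addn0 card_lcoset card_invg => <-.
rewrite subset_leq_card // subUset sumset_subG //= -(lcoset_id Gx) lcosetS.
by rewrite -invGid invSg A0_subG.
Qed.

Lemma sumset_A0 r : sumset r (A0 A) = sumset r A.
Proof. by elim: r => //= r ->; rewrite /A0 setUA setUid. Qed.

Lemma gen_A0 : <<A0 A>> = <<A>>.
Proof.
apply/eqP; rewrite eqEsubset (genS subset_A0) andbT gen_subG.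
by rewrite subUset sub1G subset_gen.
Qed.

End Sumset.

Lemma sumset_set1_sub (gT : finGroupType) (x : gT) r :
  sumset r [set x] \subset [set x ^+ i | i : 'I_r.+1].
Proof.
elim: r => [|r IHr] /=; first by rewrite sub1set; apply/imsetP; exists ord0.
apply/subsetP => _ /mulsgP[y b /(subsetP IHr)/imsetP[i _ ->] A0b ->].
move: A0b; rewrite !inE => /orP[/eqP->|/eqP->].
  by rewrite mulg1; apply/imsetP; exists (widen_ord (leqnSn _) i).
by rewrite -expgSr; apply/imsetP; exists (lift ord0 i).
Qed.

Lemma mem_sumset_set1 (gT : finGroupType) (x : gT) r i :
  i <= r -> x ^+ i \in sumset r [set x].
Proof.
elim: r i => [|r IHr] [|i] // le_ir; rewrite ?expg0 ?mem_sumset_1 //.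
by rewrite expgSr mem_mulg ?IHr // !inE eqxx orbT.
Qed.

Lemma quotient_sumset (gT : finGroupType) (H : {group gT}) (A : {set gT}) r :
  A \subset 'N(H) -> sumset r A / H = sumset r (A / H).
Proof.
move=> nHA; elim: r => [|r IHr] /=; first by rewrite -set1gE quotient1.
rewrite quotientMr; last by rewrite subUset sub1set group1.
by rewrite IHr /A0 quotientU -set1gE quotient1.
Qed.

Lemma card_mul_setUI (gT : finGroupType) (X Y B : {set gT}) :
  #|(X :|: Y) * B| + #|(X :&: Y) * B| <= #|X * B| + #|Y * B|.
Proof.
rewrite mulUg -(cardsUI (X * B)) leq_add2l subset_leq_card //.
by rewrite subsetI !mulSg ?subsetIl ?subsetIr.
Qed.

Section Atoms.
Variables (gT : finGroupType) (G : {group gT}) (B : {set gT}).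
Hypotheses (cGG : abelian G) (sBG : B \subset G) (B1 : 1 \in B).
Implicit Types X Y : {set gT}.

Definition fragment X := [&& X \subset G, X != set0 & X * B != G].

Definition boundary X := #|X * B| - #|X|.

Definition atom X :=
  [/\ fragment X, forall Y, fragment Y -> boundary X <= boundary Y
    & forall Y, fragment Y -> boundary Y = boundary X -> #|X| <= #|Y|].

Lemma leq_card_mul X : #|X| <= #|X * B|.
Proof. exact/subset_leq_card/mulg_subl. Qed.

(* (G - XB)^-1 B misses X^-1, because G is abelian. *)
Lemma card_mul_compl_inv X :
  X \subset G -> #|(G :\: X * B)^-1 * B| + #|X| <= #|G|.
Proof.
move=> sXG; have sXiG : X^-1 \subset G by rewrite -invGid invSg.
suff /subset_leq_card : (G :\: X * B)^-1 * B \subset G :\: X^-1.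
  by rewrite cardsDS // card_invg addnC -leq_subRL // subset_leq_card.
apply/subsetP => z /mulsgP[y b]; rewrite inE => /setDP[Gy notXBy] Bb ->.
have Gb : b \in G := subsetP sBG b Bb.
rewrite in_setD mem_invg invMg groupM ?(groupVl Gy) // andbT.
apply: contra notXBy => Xby; have -> : y^-1 = (b^-1 * y^-1) * b.
  by rewrite -(centsP cGG b Gb _ (groupM (groupVr Gb) Gy)) mulKVg.
exact: mem_mulg.
Qed.

Hypothesis BnG : B != G.

Lemma fragment1 : fragment [set 1].
Proof.
rewrite /fragment sub1set group1 -set1gE mul1g BnG andbT.
by apply/set0Pn; exists 1; rewrite set11.
Qed.

Lemma boundary_lcoset x X : boundary (x *: X) = boundary X.
Proof. by rewrite /boundary -mulgA !card_lcoset. Qed.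

Lemma fragment_lcoset x X : x \in G -> fragment X -> fragment (x *: X).
Proof.
move=> Gx /and3P[sXG nzX XBnG]; apply/and3P; split.
- by rewrite -(lcoset_id Gx) lcosetS.
- by rewrite -card_gt0 card_lcoset card_gt0.
- apply: contra XBnG; rewrite -mulgA => /eqP xXB.
  by rewrite -[X * B](lcosetK x) xXB lcoset_id ?groupV.
Qed.

Lemma atom_lcoset x X : x \in G -> atom X -> atom (x *: X).
Proof.
move=> Gx [fX minb minc]; split; rewrite ?boundary_lcoset ?card_lcoset //.
exact: fragment_lcoset.
Qed.

Lemma atom_exists : exists X, atom X.
Proof.
have [X0 fX0 minX0] := arg_minnP boundary fragment1.
pose P Y := fragment Y && (boundary Y == boundary X0).
have PX0 : P X0 by rewrite /P fX0 eqxx.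
have [X /andP[fX /eqP bX] minX] := arg_minnP (fun Y => #|Y|) PX0.
exists X; split=> // [Y fY|Y fY bY]; first by rewrite bX minX0.
by apply: minX; rewrite /P fY bY bX eqxx.
Qed.

Lemma atom_boundary_card X Y :
  atom X -> atom Y -> boundary X = boundary Y /\ #|X| = #|Y|.
Proof.
move=> [fX minbX mincX] [fY minbY mincY].
have eb : boundary X = boundary Y by apply/eqP; rewrite eqn_leq minbX ?minbY.
by split=> //; apply/eqP; rewrite eqn_leq mincX ?mincY.
Qed.

Lemma atom_boundary_lt X : atom X -> boundary X < #|B|.
Proof.
case=> _ minb _; apply: leq_ltn_trans (minb _ fragment1) _.
rewrite /boundary -set1gE mul1g cards1 subn1 prednK // card_gt0.
by apply/set0Pn; exists 1.
Qed.

Lemma atom_mul_setU X Y :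
  atom X -> atom Y -> X :&: Y != set0 -> (X :|: Y) * B != G.
Proof.
move=> aX aY /set0Pn[z /setIP[Xz Yz]]; apply/eqP => XYBG.
have [eb ec] := atom_boundary_card aX aY.
have ltbB := atom_boundary_lt aX.
case: (aX) => /and3P[sXG nzX XBnG] minb minc.
have cXYB : #|B| <= #|X * B :&: Y * B|.
  by rewrite -(card_lcoset B z) subset_leq_card // subsetI !mulSg ?sub1set.
have cU := cardsUI (X * B) (Y * B); rewrite -mulUg XYBG in cU.
pose D : {set gT} := (G :\: X * B)^-1.
have cD : #|D| = #|G| - #|X * B| by rewrite card_invg cardsDS // mul_subG.
have cDB : #|D * B| + #|X| <= #|G| := card_mul_compl_inv sXG.
have ltXBG : #|X * B| < #|G|.
  rewrite ltn_neqAle (subset_leq_card (mul_subG sXG sBG)) andbT.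
  by apply: contra XBnG => /eqP eXBG; rewrite eqEcard mul_subG //= eXBG.
have fD : fragment D.
  apply/and3P; split.
  - by rewrite -invGid invSg subsetDl.
  - by rewrite -card_gt0 cD subn_gt0.
  - by apply: contraTneq (cDB) => ->; move: nzX; rewrite -card_gt0; lia.
have bD : boundary D = boundary X.
  apply/eqP; rewrite eqn_leq; apply/andP; split; last exact: minb.
  move: cD cDB (leq_card_mul D) (leq_card_mul X); rewrite /boundary.
  by clear; lia.
have := minc D fD bD; have := leq_card_mul X; have := leq_card_mul Y.
move: eb ec ltbB cXYB cU cD ltXBG; rewrite /boundary; clear; set_cards; lia.
Qed.

Lemma atom_meet_eq X Y : atom X -> atom Y -> X :&: Y != set0 -> X = Y.
Proof.
move=> aX aY nzXY; have [eb ec] := atom_boundary_card aX aY.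
case: (aX) => /and3P[sXG nzX XBnG] minb minc.
have fU : fragment (X :|: Y).
  apply/and3P; split; [|by apply: contraNneq nzX => U0; rewrite -subset0 -U0 subsetUl|].
    by case: aY => /and3P[sYG _ _] _ _; rewrite subUset sXG.
  exact: atom_mul_setU.
have fI : fragment (X :&: Y).
  apply/and3P; split=> //; first by rewrite subIset ?sXG.
  apply: contra XBnG => /eqP IBG.
  by rewrite eqEsubset mul_subG //= -{1}IBG mulSg ?subsetIl.
have bI : boundary (X :&: Y) = boundary X.
  apply/eqP; rewrite eqn_leq; apply/andP; split; last exact: minb.
  have := minb _ fU; have := card_mul_setUI X Y B; have := cardsUI X Y.
  have := leq_card_mul (X :&: Y); have := leq_card_mul (X :|: Y).
  have := leq_card_mul X; have := leq_card_mul Y.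
  by move: eb ec; rewrite /boundary; clear; lia.
have cI := minc _ fI bI.
have eIX : X :&: Y = X by apply/eqP; rewrite eqEcard subsetIl cI.
have eIY : X :&: Y = Y by apply/eqP; rewrite eqEcard subsetIr -ec cI.
by rewrite -eIX eIY.
Qed.

Lemma atom_group X : atom X -> 1 \in X -> group_set X.
Proof.
move=> aX X1; have [/and3P[sXG _ _] _ _] := aX.
have stab x : x \in X -> x *: X = X.
  move=> Xx; apply: atom_meet_eq (atom_lcoset (subsetP sXG x Xx) aX) aX _.
  by apply/set0Pn; exists x; rewrite inE Xx andbT mem_lcoset mulVg.
apply/group_setP; split=> // x y Xx Xy.
by rewrite -(stab x Xx) mem_lcoset mulKg.
Qed.

Lemma atom_group_exists : exists H : {group gT}, atom H.
Proof.
have [X aX] := atom_exists.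
have [/and3P[sXG /set0Pn[x Xx] _] _ _] := aX.
have aX' := atom_lcoset (groupVr (subsetP sXG x Xx)) aX.
have X'1 : 1 \in x^-1 *: X by rewrite mem_lcoset invgK mulg1.
by exists (Group (atom_group aX' X'1)).
Qed.

End Atoms.

Section SumsetGrowth.
Variables (gT : finGroupType) (G : {group gT}) (A : {set gT}).
Hypotheses (cGG : abelian G) (sAG : A \subset G).
Local Notation B := (A0 A).
Local Notation S r := (sumset r A).

Lemma card_sumset_succ (H : {set gT}) r :
  atom G B H -> S r.+1 != G -> #|S r| + boundary B H <= #|S r.+1|.
Proof.
case=> _ minb _ SnG.
have fS : fragment G B (S r).
  apply/and3P; split; [exact: sumset_subG | | exact: SnG].
  by apply/set0Pn; exists 1; apply: mem_sumset_1.
rewrite -leq_subRL ?leq_card_mul ?mem_A0_1 //; exact: minb.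
Qed.

Lemma card_sumset_atom (H : {set gT}) r :
  atom G B H -> S r.+1 != G -> #|B| + r * boundary B H <= #|S r.+1|.
Proof.
move=> aH; elim: r => [|r IHr] SnG; first by rewrite sumset1 mul0n addn0.
have := card_sumset_succ aH SnG; have := IHr (sumset_neq_leq sAG (leqnSn _) SnG).
by rewrite mulSn; lia.
Qed.

Lemma atom_mul_card (H : {group gT}) :
  <<A>> = G -> atom G B H -> 2 * #|H| <= #|H * B|.
Proof.
move=> genA [/and3P[sHG _ HBnG] _ _].
have [b Bb Hb'] : exists2 b, b \in B & b \notin H.
  apply/subsetPn; apply: contra HBnG => sBH.
  have sAH : A \subset H := subset_trans (subset_A0 A) sBH.
  have sGH : G \subset H by rewrite -genA gen_subG.
  rewrite eqEsubset mul_subG ?(subset_trans sBH) //=.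
  exact: subset_trans sGH (mulg_subl _ (mem_A0_1 A)).
have disj : H :&: H :* b = set0.
  apply/setP => y; rewrite in_setI in_set0; apply/andP => -[Hy /rcosetP[h Hh def_y]].
  by case/negP: Hb'; rewrite (_ : b = h^-1 * y) ?groupM ?groupV // def_y mulKg.
have := cardsUI H (H :* b); rewrite disj cards0 addn0 card_rcoset addnn -mul2n => <-.
by rewrite subset_leq_card // subUset mulg_subl ?mem_A0_1 // mulgS ?sub1set.
Qed.

Lemma sumset_isoperimetric m : <<A>> = G -> S m.+2 != G ->
  exists H : {group gT}, [/\ H \subset G, 2 * #|H| <= #|H * B|, #|B| <= #|H * B|
    & 2 * #|B| + m * (#|H * B| - #|H|) <= #|G|].
Proof.
move=> genA SnG.
have BnG : B != G by rewrite -sumset1 (sumset_neq_leq sAG _ SnG).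
have [H aH] := atom_group_exists cGG (A0_subG sAG) (mem_A0_1 A) BnG.
have [/and3P[sHG _ _] _ _] := aH.
exists H; split=> //; [exact: atom_mul_card | exact/subset_leq_card/mulg_subr |].
have := card_sumset_atom aH (sumset_neq_leq sAG (leqnSn _) SnG).
by have := card_sumset_A0 sAG SnG; rewrite /boundary; set_cards; lia.
Qed.

Lemma card_A0_le m : <<A>> = G -> S m.+2 != G -> (m + 4) * #|B| <= 2 * #|G|.
Proof. by move=> genA /(sumset_isoperimetric genA)[H [_]]; nia. Qed.

Lemma card_A0_eq m : <<A>> = G -> S m.+3 != G -> ((m + 5) * #|B| = 2 * #|G|)%N ->
  exists H : {group gT}, [/\ H \subset G, H * B = B & #|B| = (2 * #|H|)%N].
Proof.
move=> genA /(sumset_isoperimetric genA)[H [sHG le2H leB bound]] eqB.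
have [eHB e2H] : #|H * B| = #|B| /\ #|H * B| = (2 * #|H|)%N by nia.
exists H; split=> //; last by rewrite -eHB.
by apply/eqP; rewrite eq_sym eqEcard mulg_subr ?group1 //=; move: eHB; set_cards; lia.
Qed.

End SumsetGrowth.

Lemma card_coset_pair (gT : finGroupType) (H : {group gT}) (g : gT) :
  g \notin H -> #|H :|: g *: H| = (2 * #|H|)%N.
Proof.
move=> Hg'; have disj : H :&: g *: H = set0.
  apply/setP => y; rewrite in_setI in_set0; apply/andP => -[Hy /lcosetP[h Hh def_y]].
  by case/negP: Hg'; rewrite (_ : g = y * h^-1) ?groupM ?groupV // def_y mulgK.
by have := cardsUI H (g *: H); rewrite disj cards0 addn0 card_lcoset addnn -mul2n.
Qed.

Lemma coset_pair_of_mulg_stable (gT : finGroupType) (H : {group gT}) (B : {set gT}) :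
  B \subset 'N(H) -> 1 \in B -> H * B = B -> #|B| = (2 * #|H|)%N ->
  exists2 g, g \in B & B = H :|: g *: H.
Proof.
move=> nHB B1 HBB cB; have sHB : H \subset B by rewrite -HBB mulg_subl.
have [g Bg Hg'] : exists2 g, g \in B & g \notin H.
  apply/subsetPn/negP => /subset_leq_card; rewrite cB.
  by have := cardG_gt0 H; set_cards; lia.
have sgHB : g *: H \subset B.
  by rewrite -norm_rlcoset ?(subsetP nHB) // -{1}HBB mulgS ?sub1set.
exists g => //; apply/eqP; rewrite eq_sym eqEcard subUset sHB sgHB.
by rewrite card_coset_pair // cB leqnn.
Qed.

Section CosetPair.
Variables (gT : finGroupType) (G H : {group gT}) (g : gT).
Hypotheses (cGG : abelian G) (sHG : H \subset G) (Gg : g \in G).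
Local Notation A := (H :|: g *: H).
Local Notation c := (coset H g).

Let nHG : G \subset 'N(H) := sub_abelian_norm cGG sHG.

Lemma coset_pair_subG : A \subset G.
Proof. by rewrite subUset sHG -(lcoset_id Gg) lcosetS. Qed.

Let nHA : A \subset 'N(H) := subset_trans coset_pair_subG nHG.

Lemma quotient_coset_pair : A / H = A0 [set c].
Proof.
rewrite quotientU trivg_quotient /A0 -set1gE quotientMidr.
by rewrite quotient_set1 // (subsetP nHG).
Qed.

Lemma quotient_sumset_coset_pair r : sumset r A / H = sumset r [set c].
Proof. by rewrite quotient_sumset // quotient_coset_pair sumset_A0. Qed.

Lemma sumset_coset_pair_mulg r : 0 < r -> sumset r A * H = sumset r A.
Proof.
have sH1 : [set 1] \subset H by rewrite sub1set.
case: r => // r _; rewrite /= -mulgA /A0 setUA (setUidPr sH1).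
by rewrite mulUg mulGid -mulgA mulGid.
Qed.

Lemma quotient_coset_pair_gen : <<A>> = G -> <[c]> = G / H.
Proof. by move=> genA; rewrite -genA quotient_gen // quotient_coset_pair gen_A0. Qed.

Lemma coset_pair_diam rho : 0 < rho -> #|G / H| = rho.+1 -> <[c]> = G / H ->
  [/\ sumset rho A = G, forall r, sumset r A = G -> rho <= r
    & (#|A| * rho.+1 = 2 * #|G|)%N].
Proof.
move=> rho_gt0 cGH genc; have ordc : #[c] = rho.+1 by rewrite orderE genc.
split.
- apply/eqP; rewrite eqEsubset sumset_subG ?coset_pair_subG //=.
  have nHS : sumset rho A \subset 'N(H).
    exact: subset_trans (sumset_subG _ coset_pair_subG) nHG.
  have nsHG : H <| G by rewrite -sub_abelian_normal.
  rewrite -(quotientGK nsHG) -(sumset_coset_pair_mulg rho_gt0) (normC nHS) -quotientK //.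
  apply: morphpreS; rewrite quotient_sumset_coset_pair -genc.
  by apply/subsetP => _ /cyclePmin[i lt_i ->]; rewrite mem_sumset_set1 // -ltnS -ordc.
- move=> r SrG; rewrite -ltnS -cGH -SrG quotient_sumset_coset_pair.
  apply: leq_trans (subset_leq_card (sumset_set1_sub c r)) _.
  by rewrite (leq_trans (leq_imset_card _ _)) ?card_ord.
- have Hg' : g \notin H.
    apply/negP => Hg; have : #[c] = 1%N by rewrite (coset_id Hg) order1.
    by rewrite ordc => -[rho0]; rewrite rho0 in rho_gt0.
  rewrite card_coset_pair // -(Lagrange sHG) -card_quotient // cGH.
  by rewrite mulnA.
Qed.

End CosetPair.

Lemma pboolP (P : Prop) : reflect P (pbool P).
Proof. by rewrite /pbool; case: excluded_middle_informative => ?; constructor. Qed.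

Section Extremal.
Variables (gT : finGroupType) (G : {group gT}) (rho : nat).
Hypothesis cGG : abelian G.

Lemma diam_ge_finE (A : {set gT}) : A \subset G ->
  diam_ge_fin G A rho <-> <<A>> = G /\ (forall r, sumset r A = G -> rho <= r).
Proof.
move=> sAG; split=> [[[r SrG] minr] | [genA minr]].
  by split=> //; apply: sumset_eq_gen SrG.
by split=> //; have [r SrA] := sumset_gen A; exists r; rewrite SrA.
Qed.

Lemma card_diam_le (A : {set gT}) :
  3 <= rho -> A \subset G -> <<A>> = G -> (forall r, sumset r A = G -> rho <= r) ->
  (#|A| * rho.+1 <= 2 * #|G|)%N.
Proof.
move=> rho3 sAG genA minr.
have SnG : sumset (rho - 3).+2 A != G by apply/eqP => /minr; lia.
apply: leq_trans (card_A0_le cGG sAG genA SnG).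
by rewrite mulnC leq_mul ?subset_leq_card ?subset_A0 //; lia.
Qed.

Lemma extremal_coset_pair (A : {set gT}) :
  4 <= rho -> A \subset G -> <<A>> = G -> (forall r, sumset r A = G -> rho <= r) ->
  (#|A| * rho.+1 = 2 * #|G|)%N ->
  exists (H : {group gT}) (g : gT),
    [/\ H \subset G, cyclic (G / H), #|G / H| = rho.+1,
        g \in G /\ <[coset H g]> = G / H & A = H :|: g *: H].
Proof.
move=> rho4 sAG genA minr eqA.
have SnG : sumset (rho - 4).+3 A != G by apply/eqP => /minr; lia.
have leB : ((rho - 4).+1 + 4) * #|A0 A| <= 2 * #|G| := card_A0_le cGG sAG genA SnG.
have eAB : A0 A = A.
  apply/esym/eqP; rewrite eqEcard subset_A0 /=.
  by move: leB eqA; set_cards; nia.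
have eB : ((rho - 4 + 5) * #|A0 A| = 2 * #|G|)%N.
  by move: eqA; rewrite eAB; set_cards; nia.
have [H [sHG HBB cB]] := card_A0_eq cGG sAG genA SnG eB.
have nHG : G \subset 'N(H) := sub_abelian_norm cGG sHG.
have nHB := subset_trans (A0_subG sAG) nHG.
have [g Bg defB] := coset_pair_of_mulg_stable nHB (mem_A0_1 A) HBB cB.
rewrite eAB in Bg defB cB; have Gg := subsetP sAG g Bg.
have genc : <[coset H g]> = G / H.
  by apply: quotient_coset_pair_gen; rewrite // -defB.
exists H, g; split=> //; first by rewrite -genc cycle_cyclic.
apply/eqP; rewrite -(eqn_pmul2l (cardG_gt0 H)) card_quotient // Lagrange //.
by apply/eqP; move: eqA; rewrite cB; set_cards; nia.
Qed.

Lemma coset_pair_extremal (H : {group gT}) (g : gT) :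
  0 < rho -> H \subset G -> #|G / H| = rho.+1 -> g \in G -> <[coset H g]> = G / H ->
  [/\ <<H :|: g *: H>> = G, forall r, sumset r (H :|: g *: H) = G -> rho <= r
    & (#|H :|: g *: H| * rho.+1 = 2 * #|G|)%N].
Proof.
move=> rho_gt0 sHG cGH Gg genc.
have [SG minr eqA] := coset_pair_diam cGG sHG Gg rho_gt0 cGH genc.
by split=> //; apply: sumset_eq_gen SG; apply: coset_pair_subG.
Qed.

Lemma s_rho_le : 3 <= rho -> (s_rho G rho * rho.+1 <= 2 * #|G|)%N.
Proof.
move=> rho3; rewrite -leq_divRL //; apply/bigmax_leqP => A /andP[sAG /pboolP].
by case/(diam_ge_finE sAG) => genA minr; rewrite leq_divRL // card_diam_le.
Qed.

Lemma s_rho_eqP : 4 <= rho ->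
  (s_rho G rho * rho.+1 = 2 * #|G|)%N <->
  exists H : {group gT}, [/\ H \subset G, cyclic (G / H) & #|G / H| = rho.+1].
Proof.
move=> rho4; have rho_gt0 : 0 < rho by apply: leq_trans rho4.
split.
- rewrite /s_rho.
  case: (pickP [pred A : {set gT} | (A \subset G) && pbool (diam_ge_fin G A rho)])
    => [A' PA' | P0]; last first.
    by rewrite big_pred0 // mul0n => /esym/eqP; rewrite muln_eq0 /= -leqn0 leqNgt cardG_gt0.
  rewrite (bigmax_eq_arg A' PA'); case: arg_maxnP => // A /andP[sAG /pboolP].
  case/(diam_ge_finE sAG) => genA minr _ eqA.
  have [H [g [sHG cycGH cGH _ _]]] := extremal_coset_pair rho4 sAG genA minr eqA.
  by exists H.
- case=> H [sHG /cyclicP[c defGH] cGH].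
  have /morphimP[g _ Gg defc] : c \in G / H by rewrite defGH cycle_id.
  have genc : <[coset H g]> = G / H by rewrite defGH defc.
  have [genA minr eqA] := coset_pair_extremal rho_gt0 sHG cGH Gg genc.
  have sAG : H :|: g *: H \subset G by rewrite -genA subset_gen.
  apply/eqP; rewrite eqn_leq s_rho_le ?(ltnW rho4) //= -eqA leq_mul2r /=.
  by apply: leq_bigmax_cond; rewrite sAG; apply/pboolP/diam_ge_finE.
Qed.

End Extremal.

Theorem theorem2p9 (gT : finGroupType) (G : {group gT}) (rho : nat) :
  abelian G -> 4 <= rho ->
  (s_rho G rho * rho.+1 <= 2 * #|G|)%N /\
  ((s_rho G rho * rho.+1 = 2 * #|G|)%N <->
     exists H : {group gT}, [/\ H \subset G, cyclic (G / H) & #|G / H| = rho.+1]) /\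
  (forall A : {set gT}, A \subset G ->
     ([/\ <<A>> = G, (forall r, sumset r A = G -> rho <= r)
        & (#|A| * rho.+1 = 2 * #|G|)%N] <->
      exists (H : {group gT}) (g : gT),
        [/\ H \subset G, cyclic (G / H), #|G / H| = rho.+1,
            g \in G /\ <[coset H g]> = G / H & A = H :|: g *: H])).
Proof.
move=> cGG rho4; have rho_gt0 : 0 < rho by apply: leq_trans rho4.
split; first exact: s_rho_le (ltnW rho4).
split; first exact: s_rho_eqP.
move=> A sAG; split=> [[genA minr eqA] | [H [g [sHG _ cGH [Gg genc] ->]]]].
  exact: extremal_coset_pair.
exact: coset_pair_extremal.
Qed.
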